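(* For $D,F\in\mathbb{R}$ let $S_{D,F}$ denote the system $\dot x=-y+xy$, $\dot y=x+Dx^2+Fy^2$. Let $D\in(-1,0)$. Then the period function of the center $(-1/D,0)$ of $S_{D,F}$ behaves as the period function of the center at the origin of $S_{-D-1,F}$: precisely, the change of variables $u=(Dx+1)/(D+1)$, $v=\sqrt{-D/(D+1)}\,y$ maps the periodic orbits around $(-1/D,0)$ of $S_{D,F}$ onto the periodic orbits around the origin of $S_{-D-1,F}$, and the minimal period of each such orbit of $S_{D,F}$ equals $\sqrt{-D/(D+1)}$ times the minimal period of the corresponding orbit of $S_{-D-1,F}$.
   Context: The period function of a center assigns to each periodic orbit in its period annulus (the largest punctured neighborhood of the center foliated by periodic orbits) its minimal period. *)

From HB Require Import structures.
From mathcomp Require Import all_boot all_order all_algebra.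
From mathcomp Require Import all_classical all_reals all_analysis.
Set Implicit Arguments. Unset Strict Implicit. Unset Printing Implicit Defensive.
Import Order.TTheory GRing.Theory Num.Theory.
Import numFieldNormedType.Exports.
Local Open Scope classical_set_scope.
Local Open Scope ring_scope.

Definition vfield {R : realType} (D F : R) (p : R * R) : R * R :=
  (- p.2 + p.1 * p.2, p.1 + D * p.1 ^+ 2 + F * p.2 ^+ 2).

Definition is_solution {R : realType} (D F : R) (phi : R -> R * R) : Prop :=
  forall t : R,
    is_derive t 1 (fun s => (phi s).1) (vfield D F (phi t)).1 /\
    is_derive t 1 (fun s => (phi s).2) (vfield D F (phi t)).2.

Definition is_min_period {R : realType} (D F : R) (p : R * R) (T : R) : Prop :=
  0 < T /\
  exists phi, [/\ is_solution D F phi, phi 0 = p, phi T = p &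
                  forall s, 0 < s < T -> phi s <> p].

Definition sys_orbit {R : realType} (D F : R) (p : R * R) : set (R * R) :=
  [set q | exists phi, [/\ is_solution D F phi, phi 0 = p & exists t, phi t = q]].

Definition foliated_punctured_nbhd {R : realType} (D F : R) (c : R * R)
    (P : set (R * R)) : Prop :=
  [/\ ~ P c, open (P `|` [set c]), connected (P `|` [set c]) &
      forall p, P p -> (exists T, is_min_period D F p T) /\ sys_orbit D F p `<=` P].

(* The period annulus of c: the largest such set (the union of all of them). *)
Definition period_annulus {R : realType} (D F : R) (c : R * R) : set (R * R) :=
  [set p | exists P, foliated_punctured_nbhd D F c P /\ P p].

(** The affine change of variables [u = (D x + 1) / (D + 1)], [v = k y] with
    [k = sqrt (- D / (D + 1))] maps the vector field of [S_{D,F}] to [1/k] times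
    the vector field of [S_{-D-1,F}], and sends the center [(-1/D, 0)] to the
    origin.  Hence [t |-> Phi (phi (k t))] is a solution of [S_{-D-1,F}] whenever
    [phi] solves [S_{D,F}], and conversely for the inverse map.  A homeomorphism
    which maps solutions to solutions up to a constant rescaling of time carries
    orbits onto orbits, minimal periods to minimal periods divided by the time
    scale, and foliated punctured neighbourhoods of a center onto foliated
    punctured neighbourhoods of its image, hence period annuli onto period
    annuli. *)
From HB Require Import structures.
From mathcomp Require Import all_boot all_order all_algebra.
From mathcomp Require Import all_classical all_reals all_analysis.
From mathcomp Require Import ring.
Set Implicit Arguments. Unset Strict Implicit. Unset Printing Implicit Defensive.
Import Order.TTheory GRing.Theory Num.Theory.
Import numFieldNormedType.Exports.
Local Open Scope classical_set_scope.
Local Open Scope ring_scope.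

Record orbit_conjugacy (R : realType) (D1 F1 D2 F2 : R)
    (G H : R * R -> R * R) (s : R) : Prop := OrbitConjugacy {
  conj_scale_gt0 : 0 < s;
  conj_GK : cancel G H;
  conj_HK : cancel H G;
  conj_contG : continuous G;
  conj_contH : continuous H;
  conj_solG : forall phi, is_solution D1 F1 phi ->
    is_solution D2 F2 (fun t => G (phi (s * t)));
  conj_solH : forall psi, is_solution D2 F2 psi ->
    is_solution D1 F1 (fun t => H (psi (s^-1 * t))) }.

Lemma orbit_conjugacy_sym (R : realType) (D1 F1 D2 F2 : R) G H (s : R) :
  orbit_conjugacy D1 F1 D2 F2 G H s -> orbit_conjugacy D2 F2 D1 F1 H G s^-1.
Proof.
case=> s_gt0 GK HK cG cH solG solH.
by split; rewrite ?invr_gt0 ?invrK.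
Qed.

Section OrbitConjugacy.
Variables (R : realType) (D1 F1 D2 F2 : R) (G H : R * R -> R * R) (s : R).
Hypothesis conjGH : orbit_conjugacy D1 F1 D2 F2 G H s.

Let s_neq0 : s != 0. Proof. by rewrite gt_eqF // (conj_scale_gt0 conjGH). Qed.

Lemma conj_orbit p : G @` sys_orbit D1 F1 p = sys_orbit D2 F2 (G p).
Proof.
case: conjGH => _ GK HK _ _ solG solH.
apply/seteqP; split.
  move=> _ [q [phi [sol_phi phi0 [t phit]]] <-].
  exists (fun u => G (phi (s * u))); split; first exact: solG.
    by rewrite mulr0 phi0.
  by exists (s^-1 * t); rewrite mulrA mulfV // mul1r phit.
move=> q [psi [sol_psi psi0 [t psit]]].
exists (H q); last exact: HK.
exists (fun u => H (psi (s^-1 * u))); split; first exact: solH.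
  by rewrite mulr0 psi0 GK.
by exists (s * t); rewrite mulrA mulVf // mul1r psit.
Qed.

Lemma conj_min_period p T :
  is_min_period D1 F1 p (s * T) -> is_min_period D2 F2 (G p) T.
Proof.
case: conjGH => s_gt0 GK _ _ _ solG _.
move=> [sT_gt0 [phi [sol_phi phi0 phisT no_return]]].
split; first by rewrite -(pmulr_rgt0 _ s_gt0).
exists (fun u => G (phi (s * u))); split.
- exact: solG.
- by rewrite mulr0 phi0.
- by rewrite phisT.
move=> u /andP[u_gt0 u_ltT] /(can_inj GK).
by apply: no_return; rewrite mulr_gt0 // ltr_pM2l.
Qed.

Lemma conj_foliated_punctured_nbhd c P :
  foliated_punctured_nbhd D1 F1 c P ->
  foliated_punctured_nbhd D2 F2 (G c) (G @` P).
Proof.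
case: conjGH => _ GK HK cG cH _ _ [notPc openPc connPc foliatedP].
have GPc_preim : G @` P `|` [set G c] = H @^-1` (P `|` [set c]).
  apply/seteqP; split => x /=.
    by case=> [[y Py <-]|->]; rewrite GK; [left|right].
  case=> [Px|<-]; last by right; rewrite HK.
  by left; exists (H x); rewrite ?HK.
split.
- by move=> [x Px /(can_inj GK) xc]; apply: notPc; rewrite -xc.
- by rewrite GPc_preim; apply: open_comp => // x _; apply: cH.
- rewrite -image_set1 -image_setU.
  by apply: connected_continuous_connected => //; apply: continuous_subspaceT.
move=> _ [x Px <-]; have [[T periodic_x] orbit_x] := foliatedP x Px.
split.
  exists (s^-1 * T); apply: conj_min_period.
  by rewrite mulrA mulfV // mul1r.
by rewrite -conj_orbit; apply: image_subset.
Qed.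

Lemma conj_period_annulus c p :
  period_annulus D1 F1 c p -> period_annulus D2 F2 (G c) (G p).
Proof.
move=> [P [foliatedP Pp]]; exists (G @` P); split.
  exact: conj_foliated_punctured_nbhd.
by exists p.
Qed.

End OrbitConjugacy.

Lemma conj_min_periodE (R : realType) (D1 F1 D2 F2 : R) G H (s : R) p T :
  orbit_conjugacy D1 F1 D2 F2 G H s ->
  is_min_period D2 F2 (G p) T <-> is_min_period D1 F1 p (s * T).
Proof.
move=> conjGH; split=> [|periodic_p]; last first.
  exact: (conj_min_period conjGH periodic_p).
have := conj_min_period (orbit_conjugacy_sym conjGH) (p := G p) (T := s * T).
rewrite (conj_GK conjGH) mulrA mulVf ?mul1r //.
by rewrite gt_eqF // (conj_scale_gt0 conjGH).
Qed.

Lemma conj_period_annulusE (R : realType) (D1 F1 D2 F2 : R) G H (s : R) c p :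
  orbit_conjugacy D1 F1 D2 F2 G H s ->
  period_annulus D1 F1 c p <-> period_annulus D2 F2 (G c) (G p).
Proof.
move=> conjGH; split=> [annulus_p|].
  exact: (conj_period_annulus conjGH annulus_p).
have := conj_period_annulus (orbit_conjugacy_sym conjGH) (c := G c) (p := G p).
by rewrite !(conj_GK conjGH).
Qed.

Lemma continuous_diag_affine (R : realType) (a b c : R) :
  continuous (fun p : R * R => (a * p.1 + b, c * p.2)).
Proof.
move=> p; apply: (@cvg_pair _ _ _ (nbhs p) (nbhs (a * p.1 + b)) (nbhs (c * p.2))).
  by apply: cvgD; [apply: cvgM; [apply: cvg_cst | apply: cvg_fst] | apply: cvg_cst].
by apply: cvgM; [apply: cvg_cst | apply: cvg_snd].
Qed.

Lemma is_derive_rescaled (R : realType) (f : R -> R) (s t d : R) :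
  is_derive (s * t) 1 f d -> is_derive t 1 (fun u => f (s * u)) (s * d).
Proof.
move=> df; apply: is_derive_eq (is_derive1_comp df _) _.
by rewrite mulrC; congr (_ * _); exact: mulr1.
Qed.

Lemma is_solution_diag_affine (R : realType) (D1 F1 D2 F2 a b c s : R) phi :
  (forall p, s * a * (vfield D1 F1 p).1 = (vfield D2 F2 (a * p.1 + b, c * p.2)).1) ->
  (forall p, s * c * (vfield D1 F1 p).2 = (vfield D2 F2 (a * p.1 + b, c * p.2)).2) ->
  is_solution D1 F1 phi ->
  is_solution D2 F2 (fun t => (a * (phi (s * t)).1 + b, c * (phi (s * t)).2)).
Proof.
move=> field1 field2 sol_phi t.
have [/is_derive_rescaled d1 /is_derive_rescaled d2] := sol_phi (s * t).
split; apply: is_derive_eq; [rewrite -field1 addr0 | rewrite -field2];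
  by rewrite /GRing.scale /= mulrCA mulrA.
Qed.

Lemma diag_affine_orbit_conjugacy (R : realType) (D1 F1 D2 F2 a b c s : R) :
  0 < s -> a != 0 -> c != 0 ->
  (forall p, s * a * (vfield D1 F1 p).1 = (vfield D2 F2 (a * p.1 + b, c * p.2)).1) ->
  (forall p, s * c * (vfield D1 F1 p).2 = (vfield D2 F2 (a * p.1 + b, c * p.2)).2) ->
  orbit_conjugacy D1 F1 D2 F2 (fun p => (a * p.1 + b, c * p.2))
    (fun q => (a^-1 * q.1 + - b / a, c^-1 * q.2)) s.
Proof.
move=> s_gt0 a_neq0 c_neq0 field1 field2.
have s_neq0 : s != 0 by rewrite gt_eqF.
pose G p := (a * p.1 + b, c * p.2).
pose H q := (a^-1 * q.1 + - b / a, c^-1 * q.2).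
have GK : cancel G H by move=> [x y]; rewrite /G /H /=; congr pair; field.
have HK : cancel H G by move=> [x y]; rewrite /G /H /=; congr pair; field.
split => //; try exact: continuous_diag_affine.
  by move=> phi; apply: is_solution_diag_affine.
move=> psi; apply: is_solution_diag_affine => q.
  by have := field1 (H q); rewrite -/(G (H q)) HK => <-; field; apply/andP.
by have := field2 (H q); rewrite -/(G (H q)) HK => <-; field; apply/andP.
Qed.

Lemma center_shift_conjugacy (R : realType) (D F : R) : -1 < D < 0 ->
  let k := Num.sqrt (- D / (D + 1)) in
  exists H, orbit_conjugacy D F (- D - 1) F
    (fun p => ((D * p.1 + 1) / (D + 1), k * p.2)) H k.
Proof.
move=> /andP[D_gtN1 D_lt0] k.
have D_neq0 : D != 0 by rewrite lt_eqF.
have D1_gt0 : 0 < D + 1 by rewrite -ltrBlDr sub0r.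
have D1_neq0 : D + 1 != 0 by rewrite gt_eqF.
have k2_gt0 : 0 < - D / (D + 1) by rewrite divr_gt0 ?oppr_gt0.
have k_gt0 : 0 < k by rewrite sqrtr_gt0.
have kk : k ^+ 2 = - D / (D + 1) by rewrite sqr_sqrtr // ltW.
have -> : (fun p : R * R => ((D * p.1 + 1) / (D + 1), k * p.2)) =
          (fun p => (D / (D + 1) * p.1 + 1 / (D + 1), k * p.2)).
  by apply/funext => p; congr pair; field.
eexists; apply: diag_affine_orbit_conjugacy => //.
- by rewrite mulf_neq0 ?invr_eq0.
- by rewrite gt_eqF.
- by move=> [x y] /=; field.
by move=> [x y] /=; rewrite -expr2 exprMn kk; field.
Qed.

Theorem corollary3p3 (R : realType) (D F : R) :
  -1 < D < 0 ->
  let k := Num.sqrt (- D / (D + 1)) in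
  let Phi := fun p : R * R => ((D * p.1 + 1) / (D + 1), k * p.2) in
  (forall p, period_annulus D F (- 1 / D, 0) p <->
             period_annulus (- D - 1) F (0, 0) (Phi p)) /\
  (forall q, period_annulus (- D - 1) F (0, 0) q ->
             exists p, period_annulus D F (- 1 / D, 0) p /\ Phi p = q) /\
  (forall p, period_annulus D F (- 1 / D, 0) p ->
     Phi @` (sys_orbit D F p) = sys_orbit (- D - 1) F (Phi p) /\
     forall T, is_min_period (- D - 1) F (Phi p) T <-> is_min_period D F p (k * T)).
Proof.
move=> D_range k Phi.
have [H conjPhi] : exists H, orbit_conjugacy D F (- D - 1) F Phi H k.
  exact (center_shift_conjugacy F D_range).
have Phi_center : Phi (- 1 / D, 0) = (0, 0).
  have D_neq0 : D != 0 by case/andP: D_range => _ D_lt0; rewrite lt_eqF.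
  by rewrite /Phi /= mulr0 mulrCA mulfV // mulr1 addNr mul0r.
have annulusE p : period_annulus D F (- 1 / D, 0) p <->
                  period_annulus (- D - 1) F (0, 0) (Phi p).
  by rewrite -Phi_center; apply: conj_period_annulusE conjPhi.
split; [exact: annulusE | split].
  move=> q; rewrite -(conj_HK conjPhi q) -annulusE => annulus_Hq.
  by exists (H q); rewrite (conj_HK conjPhi).
move=> p _; split; first exact: conj_orbit conjPhi p.
by move=> T; apply: conj_min_periodE conjPhi.
Qed.
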